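(* For every integer $d\geq 0$, $\chi_{td}(Q_d) \leq 2^{d+1}-1$, where $Q_d$ is the $d$-dimensional hypercube graph.
   Context: $Q_d$ is the graph with vertex set $\{0,1\}^d$ in which two vertices are adjacent iff they differ in exactly one coordinate ($Q_0$ is a single vertex). For a simple graph $G$ and a positive integer $k$, a proper $k$-total difference labeling of $G$ is a function $f: V(G)\to\{1,\dots,k\}$, extended to edges by $f(\{u,v\}) = |f(u)-f(v)|$, such that: (i) adjacent vertices receive different labels; (ii) two distinct edges sharing a vertex receive different labels; (iii) no edge receives the same label as either of its endpoints. $\chi_{td}(G)$ denotes the smallest $k$ for which such a labeling exists. *)

From mathcomp Require Import all_boot.
Set Implicit Arguments. Unset Strict Implicit. Unset Printing Implicit Defensive.

Definition hamming d (u v : d.-tuple bool) : nat :=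
  count id [seq x.1 != x.2 | x <- zip u v].

Definition Q_adj d : rel (d.-tuple bool) := fun u v => hamming u v == 1.

Definition edge_lab (T : Type) (f : T -> nat) (u v : T) : nat :=
  maxn (f u) (f v) - minn (f u) (f v).

Definition proper_td_labeling (T : finType) (adj : rel T) (k : nat) (f : T -> nat) : Prop :=
  [/\ (forall v, 1 <= f v <= k),
      (forall u v, adj u v -> f u != f v),
      (forall u v w, adj u v -> adj u w -> v != w -> edge_lab f u v != edge_lab f u w)
    &
      (forall u v, adj u v -> edge_lab f u v != f u /\ edge_lab f u v != f v)].

Definition chi_td_le (T : finType) (adj : rel T) (k : nat) : Prop :=
  exists f : T -> nat, proper_td_labeling adj k f.

(* Read a vertex v of Q_d as the binary number bin v < 2^d and label it
   2 bin v + 1.  Adjacent vertices differ in a single bit i, so the edge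
   between them gets the label 2 * 2^i: edge labels are even while vertex
   labels are odd, and the edges at a vertex flip pairwise distinct bits,
   hence receive pairwise distinct powers of two. *)

From mathcomp Require Import all_boot.
From mathcomp Require Import zify.

Set Implicit Arguments.
Unset Strict Implicit.
Unset Printing Implicit Defensive.

Section OddDoubleLabeling.

Variables (T : finType) (adj : rel T) (g : T -> nat) (m : nat).

Lemma edge_lab_odd_double (u v : T) :
  edge_lab (fun x => (g x).*2.+1) u v = (edge_lab g u v).*2.
Proof. rewrite /edge_lab; lia. Qed.

Hypothesis g_lt : forall v, g v < m.
Hypothesis edge_lab_g_gt0 : forall u v, adj u v -> 0 < edge_lab g u v.
Hypothesis edge_lab_g_inj : forall u v w,
  adj u v -> adj u w -> v != w -> edge_lab g u v != edge_lab g u w.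

Lemma proper_td_odd_double :
  proper_td_labeling adj (2 * m - 1) (fun x => (g x).*2.+1).
Proof.
split=> [v | u v /edge_lab_g_gt0 | u v w uv uw vw | u v _].
- by have := g_lt v; lia.
- by rewrite /edge_lab; lia.
- by rewrite !edge_lab_odd_double -!muln2 eqn_pmul2r // edge_lab_g_inj.
- by rewrite edge_lab_odd_double; split; apply/eqP => /(congr1 odd);
    rewrite /= !odd_double.
Qed.

End OddDoubleLabeling.

Fixpoint bin (s : seq bool) : nat := if s is b :: s' then b + 2 * bin s' else 0.

Lemma bin_lt (s : seq bool) : bin s < 2 ^ size s.
Proof. by elim: s => [|[] s IH] //=; rewrite expnS; lia. Qed.

Definition flip_bit (s : seq bool) (i : nat) : seq bool :=
  set_nth false s i (~~ nth false s i).

Lemma edge_lab_bin_flip_bit (s : seq bool) (i : nat) :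
  i < size s -> edge_lab bin s (flip_bit s i) = 2 ^ i.
Proof.
rewrite /edge_lab; elim: s i => [|b s IH] [|i] //= i_lt.
- by case: b => /=; lia.
- by move/IH: i_lt; rewrite /flip_bit expnS; lia.
Qed.

Definition hamming_seq (s t : seq bool) : nat :=
  count id [seq x.1 != x.2 | x <- zip s t].

Lemma hamming_seq_cons (a b : bool) (s t : seq bool) :
  hamming_seq (a :: s) (b :: t) = (a != b) + hamming_seq s t.
Proof. by []. Qed.

Lemma hamming_seq_eq0 (s t : seq bool) :
  size s = size t -> hamming_seq s t = 0 -> s = t.
Proof.
elim: s t => [|a s IH] [|b t] //= [] /IH{}IH.
by rewrite hamming_seq_cons; case: eqVneq => [-> /= /IH ->|].
Qed.

Lemma hamming_seq_eq1 (s t : seq bool) :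
  size s = size t -> hamming_seq s t = 1 ->
  exists2 i, i < size s & t = flip_bit s i.
Proof.
elim: s t => [|a s IH] [|b t] //= [] st_size.
rewrite hamming_seq_cons.
case: eqVneq => [<- /= /(IH _ st_size) [i i_lt ->] | ab].
  by exists i.+1.
move=> /eqP; rewrite eqSS => /eqP /(hamming_seq_eq0 st_size) <-.
by exists 0 => //; case: a b ab => [] [].
Qed.

Lemma Q_adj_flip_bit (d : nat) (u v : d.-tuple bool) :
  Q_adj u v ->
  exists2 i, v = flip_bit u i :> seq bool
            & edge_lab (fun x : d.-tuple bool => bin x) u v = 2 ^ i.
Proof.
move=> /eqP /(hamming_seq_eq1 (etrans (size_tuple u) (esym (size_tuple v)))).
move=> [i i_lt v_flip]; exists i => //.
by move: (edge_lab_bin_flip_bit i_lt); rewrite -v_flip.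
Qed.

Theorem mainTheorem9 (d : nat) : chi_td_le (@Q_adj d) (2 ^ d.+1 - 1).
Proof.
exists (fun v : d.-tuple bool => (bin v).*2.+1); rewrite expnS.
apply: proper_td_odd_double => [v | u v | u v w].
- by have := bin_lt v; rewrite size_tuple.
- by case/Q_adj_flip_bit=> i _ ->; rewrite expn_gt0.
- case/Q_adj_flip_bit=> i v_flip -> /Q_adj_flip_bit[j w_flip ->].
  apply: contra; rewrite eqn_exp2l // => /eqP ij.
  by apply/eqP/val_inj; rewrite /= v_flip w_flip ij.
Qed.
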